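(* Let $A\in\mathbb{R}^{n\times n}$ be nonsingular with $A\geq 0$ and $A^{-1}\geq 0$, and let $(U_k^{(i)},V_k^{(i)},E_k)_{k=1}^{p}$, $i=1,2$, be two weak regular multisplittings of $A$ (with the same weighting matrices $E_k$). If $V_k^{(2)}\geq V_k^{(1)}$ for each $k=1,\ldots,p$, then $\rho(H_1)\leq\rho(H_2)<1$, where $H_i=\sum_{k=1}^{p}E_k[U_k^{(i)}]^{-1}V_k^{(i)}$ for $i=1,2$.
   Context: Inequalities are entrywise; $\rho(\cdot)$ is the spectral radius. A splitting $A=U-V$ of $A\in\mathbb{R}^{n\times n}$ is weak regular if $U$ is nonsingular, $U^{-1}\geq 0$ and $U^{-1}V\geq 0$. A weak regular multisplitting of $A$ is a triplet $(U_k,V_k,E_k)_{k=1}^{p}$ where each $A=U_k-V_k$ is a weak regular splitting and each $E_k\geq 0$ is an $n\times n$ diagonal matrix with $\sum_{k=1}^{p}E_k=I$. *)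

(* real matrices over an arbitrary real closed field R
   (e.g. the reals); eigenvalues live in the algebraic closure R[i]. *)
From HB Require Import structures.
From mathcomp Require Import all_boot all_order all_algebra.
From mathcomp Require Import complex.
Set Implicit Arguments. Unset Strict Implicit. Unset Printing Implicit Defensive.
Import Order.TTheory GRing.Theory Num.Theory.
Local Open Scope ring_scope.

Definition nonneg_mx (R : numDomainType) m n (A : 'M[R]_(m, n)) : Prop :=
  forall i j, 0 <= A i j.

Definition le_mx (R : numDomainType) m n (A B : 'M[R]_(m, n)) : Prop :=
  forall i j, A i j <= B i j.

Definition cplx_mx (R : rcfType) n (A : 'M[R]_n) : 'M[R[i]]_n :=
  map_mx (fun x => (x%:C)%C) A.

(* the eigenvalues (with algebraic multiplicity) of A in R[i]:
   the roots of the characteristic polynomial *)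
Definition spectrum (R : rcfType) n (A : 'M[R]_n) : seq R[i] :=
  sval (closed_field_poly_normal (char_poly (cplx_mx A))).

(* spectral radius: max modulus of the eigenvalues (0 if n = 0) *)
Definition spectral_radius (R : rcfType) n (A : 'M[R]_n) : R :=
  \big[Num.max/0]_(z <- spectrum A) Normc.normc z.

Definition weak_regular_splitting (R : numFieldType) n (A U V : 'M[R]_n) : Prop :=
  [/\ A = U - V, U \in unitmx, nonneg_mx (invmx U) & nonneg_mx (invmx U *m V)].

Definition weak_regular_multisplitting (R : numFieldType) n p
  (A : 'M[R]_n) (U V E : 'I_p -> 'M[R]_n) : Prop :=
  [/\ forall k, weak_regular_splitting A (U k) (V k),
      forall k, is_diag_mx (E k) /\ nonneg_mx (E k)
    & \sum_(k < p) E k = 1%:M].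

Definition multisplitting_iter (R : numFieldType) n p
  (U V E : 'I_p -> 'M[R]_n) : 'M[R]_n :=
  \sum_(k < p) E k *m (invmx (U k) *m V k).

From HB Require Import structures.
From mathcomp Require Import all_boot all_order all_algebra.
From mathcomp Require Import complex polyrcf.
Set Implicit Arguments. Unset Strict Implicit. Unset Printing Implicit Defensive.
Import Order.TTheory GRing.Theory Num.Theory.
Local Open Scope ring_scope.

(* Write H = I - M A with M = \sum_k E_k U_k^-1 >= 0.  Since A = U_k - V_k, one gets
   H_2 - H_1 = \sum_k E_k U1_k^-1 (V2_k - V1_k) U2_k^-1 A >= 0 and H_1 >= 0, so the
   comparison follows from the monotonicity of the spectral radius on nonnegative
   matrices.  That monotonicity is proved without Perron-Frobenius: if t lies above
   every real eigenvalue of C >= 0, then t I - C is monotone (x (t I - C) >= 0 implies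
   x >= 0), by induction on the dimension through the Schur complement of the
   top-left entry; and an eigenpair (mu, v) of 0 <= B <= C with |mu| >= t gives
   |v| (t I - C) <= 0, hence v = 0.
   For convergence, an eigenvalue |mu| >= 1 of H_2 gives |v| <= |v| H_2 = |v| - |v| M A,
   so -|v| M >= 0 after multiplying by A^-1 >= 0; thus |v| M = 0, each |v| E_k
   vanishes, and |v| = |v| \sum_k E_k = 0. *)

Lemma horner_char_poly (R : comNzRingType) n (A : 'M[R]_n) s :
  (char_poly A).[s] = \det (s%:M - A).
Proof.
rewrite horner_sum; apply: eq_bigr => sigma _.
rewrite hornerM horner_exp !hornerE; congr (_ * _).
rewrite (big_morph _ (fun p q => hornerM p q s) (hornerC 1 s)).
by apply: eq_bigr => i _; rewrite !mxE !(hornerE, hornerMn).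
Qed.

Lemma submx_scalar_sub (R : comNzRingType) n (C : 'M[R]_(1 + n)) s :
  [/\ ulsubmx (s%:M - C) = s%:M - ulsubmx C, ursubmx (s%:M - C) = - ursubmx C,
      dlsubmx (s%:M - C) = - dlsubmx C & drsubmx (s%:M - C) = s%:M - drsubmx C].
Proof.
have -> : s%:M - C = block_mx (s%:M - ulsubmx C) (- ursubmx C)
                              (- dlsubmx C) (s%:M - drsubmx C) :> 'M_(1 + n).
  by rewrite -{1}[C]submxK (scalar_mx_block 1 n s) opp_block_mx add_block_mx !sub0r.
by rewrite block_mxKul block_mxKur block_mxKdl block_mxKdr.
Qed.

Definition schur_compl (R : fieldType) n (Q : 'M[R]_(1 + n)) : R :=
  (ulsubmx Q - ursubmx Q *m invmx (drsubmx Q) *m dlsubmx Q) 0 0.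

Lemma det_schur_compl (R : fieldType) n (Q : 'M[R]_(1 + n)) :
  drsubmx Q \in unitmx -> \det Q = \det (drsubmx Q) * schur_compl Q.
Proof.
move=> unitD; rewrite /schur_compl -{1}[Q]submxK.
set a := ulsubmx Q; set b := ursubmx Q; set c := dlsubmx Q; set D := drsubmx Q.
have -> : block_mx a b c D =
    block_mx 1%:M (b *m invmx D) 0 1%:M *m block_mx (a - b *m invmx D *m c) 0 c D.
  by rewrite mulmx_block !mul1mx !mul0mx !add0r ?mulmx0 ?addr0 mulmxKV // subrK.
rewrite (@det_mulmx _ (1 + n)) det_ublock det_lblock !det1 !mul1r det_mx11.
by rewrite mulrC.
Qed.

Lemma horner_char_poly_schur (R : fieldType) n (C : 'M[R]_(1 + n)) s :
  s%:M - drsubmx C \in unitmx ->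
  (char_poly C).[s] = (char_poly (drsubmx C)).[s] * schur_compl (s%:M - C).
Proof.
have [_ _ _ drE] := submx_scalar_sub C s.
by move=> unitD; rewrite !horner_char_poly det_schur_compl drE.
Qed.

Section NonnegMatrices.
Variable R : numDomainType.

Lemma nonneg_mxM m n k (A : 'M[R]_(m, n)) (B : 'M[R]_(n, k)) :
  nonneg_mx A -> nonneg_mx B -> nonneg_mx (A *m B).
Proof. by move=> A_ge0 B_ge0 i j; rewrite mxE sumr_ge0 // => l _; rewrite mulr_ge0. Qed.

Lemma nonneg_mxD m n (A B : 'M[R]_(m, n)) :
  nonneg_mx A -> nonneg_mx B -> nonneg_mx (A + B).
Proof. by move=> A_ge0 B_ge0 i j; rewrite mxE addr_ge0. Qed.

Lemma nonneg_mx_sum m n p (F : 'I_p -> 'M[R]_(m, n)) :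
  (forall k, nonneg_mx (F k)) -> nonneg_mx (\sum_(k < p) F k).
Proof. by move=> F_ge0 i j; rewrite summxE sumr_ge0 // => k _; apply: F_ge0. Qed.

Lemma nonneg_mxN_eq0 m n (A : 'M[R]_(m, n)) :
  nonneg_mx A -> nonneg_mx (- A) -> A = 0.
Proof.
move=> A_ge0 NA_ge0; apply/matrixP => i j; apply/eqP; rewrite mxE eq_le A_ge0 andbT.
by have := NA_ge0 i j; rewrite mxE oppr_ge0.
Qed.

Lemma le_mx_subr_ge0 m n (A B : 'M[R]_(m, n)) : le_mx A B <-> nonneg_mx (B - A).
Proof. by split=> leAB i j; have := leAB i j; rewrite !mxE subr_ge0. Qed.

End NonnegMatrices.

(* Collatz's monotone matrices, acting on row vectors as the eigenvectors below do. *)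
Definition monotone_mx (R : numDomainType) n (Q : 'M[R]_n) : Prop :=
  forall x : 'rV[R]_n, nonneg_mx (x *m Q) -> nonneg_mx x.

Lemma monotone_mx_ker0 (R : numDomainType) n (Q : 'M[R]_n) (v : 'rV_n) :
  monotone_mx Q -> v *m Q = 0 -> v = 0.
Proof.
move=> monoQ vQ0; apply: nonneg_mxN_eq0; apply: monoQ.
  by rewrite vQ0 => i j; rewrite mxE.
by rewrite mulNmx vQ0 oppr0 => i j; rewrite mxE.
Qed.

Section MonotoneMatrices.
Variable R : numFieldType.

Lemma monotone_mx_unit n (Q : 'M[R]_n) : monotone_mx Q -> Q \in unitmx.
Proof.
move=> monoQ; rewrite unitmxE unitfE; apply/negP => /det0P [v v_neq0 vQ0].
by rewrite (monotone_mx_ker0 monoQ vQ0) eqxx in v_neq0.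
Qed.

Lemma monotone_mx_invmx_ge0 n (Q : 'M[R]_n) : monotone_mx Q -> nonneg_mx (invmx Q).
Proof.
move=> monoQ i j; have := monoQ (row i (invmx Q)).
rewrite -row_mul mulVmx ?monotone_mx_unit // => /(_ _) row_ge0.
by have := row_ge0 _ 0 j; rewrite mxE; apply=> k l; rewrite !mxE ler0n.
Qed.

Lemma schur_compl_le n (Q : 'M[R]_(1 + n)) :
  monotone_mx (drsubmx Q) -> nonneg_mx (- ursubmx Q) -> nonneg_mx (- dlsubmx Q) ->
  schur_compl Q <= ulsubmx Q 0 0.
Proof.
move=> monoD b_le0 c_le0; rewrite /schur_compl mxE gerDl mxE oppr_le0.
rewrite -[_ *m _ *m _]opprK -mulmxN -!mulNmx; apply: nonneg_mxM c_le0 0 0.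
by apply: nonneg_mxM b_le0 _; apply: monotone_mx_invmx_ge0.
Qed.

Lemma monotone_block_mx n (Q : 'M[R]_(1 + n)) :
  monotone_mx (drsubmx Q) -> nonneg_mx (- ursubmx Q) -> nonneg_mx (- dlsubmx Q) ->
  0 < schur_compl Q -> monotone_mx Q.
Proof.
move=> monoD b_le0 c_le0 schur_gt0 x.
rewrite /schur_compl in schur_gt0; rewrite -{1}[Q]submxK -[x]hsubmxK mul_row_block.
set a := ulsubmx Q in schur_gt0 *; set b := ursubmx Q in b_le0 schur_gt0 *.
set c := dlsubmx Q in c_le0 schur_gt0 *; set D := drsubmx Q in monoD schur_gt0 *.
set x0 := lsubmx x; set y := rsubmx x => xQ_ge0.
have l_ge0 : nonneg_mx (x0 *m a + y *m c).
  by move=> i j; have := xQ_ge0 i (lshift n j); rewrite row_mxEl.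
have r_ge0 : nonneg_mx (x0 *m b + y *m D).
  by move=> i j; have := xQ_ge0 i (rshift 1 j); rewrite row_mxEr.
have unitD := monotone_mx_unit monoD.
have Nb_invD_ge0 : nonneg_mx (- b *m invmx D).
  by apply: nonneg_mxM b_le0 _; apply: monotone_mx_invmx_ge0.
set y' : 'rV_n := y + x0 *m b *m invmx D.
have y'_ge0 : nonneg_mx y'.
  by apply: monoD; rewrite /y' mulmxDl mulmxKV // addrC.
have x0_ge0 : nonneg_mx x0.
  move=> i j; rewrite !ord1 -(pmulr_lge0 _ schur_gt0).
  have : 0 <= (x0 *m (a - b *m invmx D *m c) + y' *m c) 0 0.
    by rewrite /y' mulmxBr mulmxDl !mulmxA addrACA addNr addr0; apply: l_ge0.
  rewrite mxE [X in X + _]mxE big_ord1 => /le_trans; apply.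
  by rewrite gerDl; have := nonneg_mxM y'_ge0 c_le0 0 0; rewrite mulmxN mxE oppr_ge0.
have y_ge0 : nonneg_mx y.
  have -> : y = y' + x0 *m (- b *m invmx D) by rewrite mulmxA mulmxN mulNmx addrK.
  by apply: nonneg_mxD => //; apply: nonneg_mxM.
by move=> i j; rewrite mxE; case: splitP => k _; [apply: x0_ge0 | apply: y_ge0].
Qed.

End MonotoneMatrices.

Section RealPolynomials.
Variable R : rcfType.
Implicit Types (p q : {poly R}) (t : R).

Lemma monic_horner_gt0 p t : p \is monic -> {in `[t, +oo[, forall s, ~~ root p s} ->
  {in `[t, +oo[, forall s, 0 < p.[s]}.
Proof.
move=> p_monic noroot_p s ts; have := sgp_pinftyP noroot_p ts.
by rewrite /sgp_pinfty (eqP p_monic) sgr1 => /eqP; rewrite sgr_cp0.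
Qed.

Lemma horner_ge0_right q t : (forall s, t < s -> 0 <= q.[s]) -> 0 <= q.[t].
Proof.
move=> q_ge0; rewrite leNgt -oppr_gt0; apply/negP => qt_lt0.
have [d d_gt0 near_t] := @poly_cont R t q (- q.[t]) (qt_lt0 : 0 < - q.[t]).
have d2_gt0 : 0 < d / 2%:R by rewrite divr_gt0 ?ltr0n.
have := near_t (t + d / 2%:R); rewrite addrAC subrr add0r ger0_norm ?ltW //.
rewrite ltr_pdivrMr ?ltr0n // ltr_pMr ?ltr1n // => /(_ isT) /ltr_normlW.
rewrite ltrBlDr addNr; apply/negP; rewrite -leNgt.
by apply: q_ge0; rewrite ltrDl.
Qed.

Lemma poly_max_root p s1 : p != 0 -> root p s1 ->
  exists2 s0, s1 <= s0 & root p s0 /\ {in `]s0, +oo[, forall s, ~~ root p s}.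
Proof.
move=> p_neq0 root_s1; have := root_in_cauchy_bound p_neq0 root_s1.
rewrite in_itv /= => /andP[_ s1_lt_cb].
case: (prev_rootP p (s1 - 1) (cauchy_bound p)) =>
  [/eqP|s0 _ /eqP root_s0|c _ _ noroot_p].
- by rewrite (negPf p_neq0).
- rewrite in_itv /= => /andP[_ s0_lt_cb] noroot_p; exists s0; last split=> //.
    rewrite leNgt; apply/negP => s0_lt_s1.
    by have := noroot_p s1; rewrite in_itv /= s0_lt_s1 s1_lt_cb root_s1 => /(_ isT).
  move=> s; rewrite in_itv /= andbT => s0_lt_s.
  have [s_lt_cb|cb_le_s] := ltP s (cauchy_bound p).
    by apply: noroot_p; rewrite in_itv /= s0_lt_s.
  by apply: ge_cauchy_bound; rewrite // in_itv /= cb_le_s.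
- have := noroot_p s1; rewrite in_itv /= s1_lt_cb andbT root_s1.
  by rewrite ltrBlDr ltrDl ltr01 => /(_ isT).
Qed.

End RealPolynomials.

Section SchurStep.
Variables (R : rcfType) (n : nat) (C : 'M[R]_(1 + n)).
Hypothesis C_ge0 : nonneg_mx C.
Hypothesis monotone_dr : forall t,
  {in `[t, +oo[, forall s, ~~ root (char_poly (drsubmx C)) s} ->
  monotone_mx (t%:M - drsubmx C).

Lemma schur_compl_scalar_sub_le s :
  monotone_mx (s%:M - drsubmx C) -> schur_compl (s%:M - C) <= s - ulsubmx C 0 0.
Proof.
have [ulE urE dlE drE] := submx_scalar_sub C s.
move=> monoD; have := @schur_compl_le _ _ (s%:M - C).
rewrite ulE urE dlE drE !opprK !mxE eqxx mulr1n.
by apply=> // i j; rewrite !mxE; apply: C_ge0.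
Qed.

Lemma noroot_char_poly_drsubmx t :
  {in `[t, +oo[, forall s, ~~ root (char_poly C) s} ->
  {in `[t, +oo[, forall s, ~~ root (char_poly (drsubmx C)) s}.
Proof.
(* Past the largest root s0 of pD the Schur formula gives pC <= (s - C_00) pD, so by
   continuity pC.[s0] <= 0, whereas pC > 0 on [t, +oo[. *)
set pC := char_poly C; set pD := char_poly (drsubmx C) => noroot_C s1.
rewrite in_itv /= andbT => t_le_s1; apply/negP => root_s1.
have pD_neq0 : pD != 0 by apply: monic_neq0; apply: char_poly_monic.
have [s0 s1_le_s0 [/eqP root_s0 noroot_D]] := poly_max_root pD_neq0 root_s1.
have pC_gt0 := monic_horner_gt0 (char_poly_monic C) noroot_C.
have pC_le s : s0 < s -> pC.[s] <= (s - ulsubmx C 0 0) * pD.[s].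
  move=> s0_lt_s.
  have noroot_Ds : {in `[s, +oo[, forall r, ~~ root pD r}.
    by move=> r; rewrite in_itv /= andbT => s_le_r; apply: noroot_D;
      rewrite in_itv /= (lt_le_trans s0_lt_s s_le_r).
  have monoD := monotone_dr noroot_Ds.
  have pDs_gt0 : 0 < pD.[s].
    by apply: (monic_horner_gt0 (char_poly_monic _) noroot_Ds); rewrite in_itv /= lexx.
  rewrite /pC horner_char_poly_schur ?monotone_mx_unit // -/pD mulrC.
  by rewrite ler_pM2r // schur_compl_scalar_sub_le.
have pC_s0_le0 : pC.[s0] <= 0.
  have := @horner_ge0_right _ (('X - (ulsubmx C 0 0)%:P) * pD - pC) s0.
  rewrite !hornerE root_s0 mulr0 sub0r oppr_ge0; apply=> s s0_lt_s.
  by rewrite !hornerE subr_ge0 pC_le.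
have := pC_gt0 s0; rewrite in_itv /= andbT (le_trans t_le_s1 s1_le_s0).
by rewrite ltNge pC_s0_le0 => /(_ isT).
Qed.

Lemma monotone_scalar_sub_step t :
  {in `[t, +oo[, forall s, ~~ root (char_poly C) s} -> monotone_mx (t%:M - C).
Proof.
move=> noroot_C; have noroot_D := noroot_char_poly_drsubmx noroot_C.
have monoD := monotone_dr noroot_D.
have [_ urE dlE drE] := submx_scalar_sub C t.
apply: monotone_block_mx; rewrite ?urE ?dlE ?drE ?opprK //.
- by move=> i j; rewrite !mxE; apply: C_ge0.
- by move=> i j; rewrite !mxE; apply: C_ge0.
have t_in : t \in `[t, +oo[ by rewrite in_itv /= lexx.
have := monic_horner_gt0 (char_poly_monic C) noroot_C t_in.
rewrite horner_char_poly_schur ?monotone_mx_unit // pmulr_rgt0 //.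
exact: monic_horner_gt0 (char_poly_monic _) noroot_D t t_in.
Qed.

End SchurStep.

Lemma monotone_scalar_sub (R : rcfType) n (C : 'M[R]_n) t : nonneg_mx C ->
  {in `[t, +oo[, forall s, ~~ root (char_poly C) s} -> monotone_mx (t%:M - C).
Proof.
elim: n C t => [|n IH] C t C_ge0; first by move=> _ x _ i [].
apply: (@monotone_scalar_sub_step _ n C) => // t' noroot_D.
by apply: IH => // i j; rewrite !mxE; apply: C_ge0.
Qed.

Section Spectrum.
Variable R : rcfType.
Implicit Types (z mu : R[i]).

Lemma normc_ge0 z : 0 <= Normc.normc z.
Proof. by case: z => a b; apply: sqrtr_ge0. Qed.

Lemma normc_real (s : R) : 0 <= s -> Normc.normc (s%:C)%C = s.
Proof. by move=> s_ge0; rewrite /Normc.normc /= expr0n addr0 sqrtr_sqr ger0_norm. Qed.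

Lemma normCE z : (Normc.normc z)%:C%C = `|z|.
Proof. by case: z => a b; rewrite normc_def. Qed.

Definition row_normc n (v : 'rV[R[i]]_n) : 'rV[R]_n := \row_j Normc.normc (v 0 j).

Lemma row_normc_ge0 n (v : 'rV[R[i]]_n) : nonneg_mx (row_normc v).
Proof. by move=> i j; rewrite mxE normc_ge0. Qed.

Lemma row_normc_eq0 n (v : 'rV[R[i]]_n) : row_normc v = 0 -> v = 0.
Proof.
move=> v0; apply/matrixP => i j; rewrite !ord1 mxE; apply: Normc.eq0_normc.
by have := congr1 (fun w : 'rV[R]_n => w 0 j) v0; rewrite !mxE.
Qed.

Lemma row_normc_eigen n (B : 'M[R]_n) mu (v : 'rV[R[i]]_n) :
  nonneg_mx B -> v *m cplx_mx B = mu *: v ->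
  le_mx (Normc.normc mu *: row_normc v) (row_normc v *m B).
Proof.
move=> B_ge0 eig_v i j.
rewrite !ord1 !mxE -(@lecR R) rmorphM rmorph_sum /= !normCE -normrM.
have -> : mu * v 0 j = (v *m cplx_mx B) 0 j by rewrite eig_v mxE.
rewrite mxE (le_trans (ler_norm_sum _ _ _)) //.
apply: ler_sum => k _; rewrite rmorphM /= !mxE normCE normrM.
by rewrite [X in _ * X <= _]ger0_norm // ler0c; apply: B_ge0.
Qed.

Lemma mem_spectrum n (A : 'M[R]_n) z :
  (z \in spectrum A) = root (char_poly (cplx_mx A)) z.
Proof.
rewrite /spectrum; case: closed_field_poly_normal => r /= ->.
rewrite rootZ ?root_prod_XsubC // lead_coef_eq0.
exact: monic_neq0 (char_poly_monic _).
Qed.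

Lemma spectrum_eigenvector n (A : 'M[R]_n) z : z \in spectrum A ->
  exists2 v : 'rV[R[i]]_n, v *m cplx_mx A = z *: v & v != 0.
Proof. by rewrite mem_spectrum -eigenvalue_root_char => /eigenvalueP. Qed.

Lemma root_char_poly_spectrum n (A : 'M[R]_n) (s : R) :
  root (char_poly A) s -> (s%:C)%C \in spectrum A.
Proof.
rewrite mem_spectrum /cplx_mx -(map_char_poly (real_complex R)) /root.
by rewrite horner_map => /eqP ->; rewrite rmorph0.
Qed.

Lemma spectral_radius_ge0 n (A : 'M[R]_n) : 0 <= spectral_radius A.
Proof.
rewrite /spectral_radius; elim: (spectrum A) => [|z s IH]; rewrite ?big_nil //.
by rewrite big_cons le_max IH orbT.
Qed.

Lemma spectral_radius_ge n (A : 'M[R]_n) z :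
  z \in spectrum A -> Normc.normc z <= spectral_radius A.
Proof. by move=> z_in; apply: le_bigmax_seq. Qed.

Lemma spectral_radius_le n (A : 'M[R]_n) c : 0 <= c ->
  (forall z, z \in spectrum A -> Normc.normc z <= c) -> spectral_radius A <= c.
Proof. by move=> c_ge0 le_c; rewrite /spectral_radius big_seq; apply: bigmax_le. Qed.

Lemma spectral_radius_lt n (A : 'M[R]_n) c : 0 < c ->
  (forall z, z \in spectrum A -> Normc.normc z < c) -> spectral_radius A < c.
Proof.
rewrite /spectral_radius => c_gt0; elim: (spectrum A) => [|z s IH] lt_c.
  by rewrite big_nil.
rewrite big_cons gt_max lt_c ?mem_head // IH // => y y_in.
by rewrite lt_c // inE y_in orbT.
Qed.

End Spectrum.

Lemma eigenvalue_normc_lt (R : rcfType) n (B C : 'M[R]_n) t mu (v : 'rV[R[i]]_n) :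
  nonneg_mx B -> le_mx B C -> monotone_mx (t%:M - C) ->
  v *m cplx_mx B = mu *: v -> v != 0 -> Normc.normc mu < t.
Proof.
move=> B_ge0 leBC monoC eig_v v_neq0; rewrite ltNge; apply/negP => t_le_mu.
set w := row_normc v; have w_ge0 : nonneg_mx w := row_normc_ge0 v.
suff : nonneg_mx (- w) by move/(nonneg_mxN_eq0 w_ge0)/row_normc_eq0/eqP; apply/negP.
apply: monoC; rewrite mulNmx mulmxBr opprB mul_mx_scalar; apply/le_mx_subr_ge0 => i j.
have wB_le_wC : le_mx (w *m B) (w *m C).
  by apply/le_mx_subr_ge0; rewrite -mulmxBr; apply: nonneg_mxM => //; apply/le_mx_subr_ge0.
apply: le_trans (wB_le_wC i j); apply: le_trans (row_normc_eigen B_ge0 eig_v i j).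
by rewrite !mxE; apply: ler_wpM2r; rewrite ?normc_ge0.
Qed.

Lemma spectral_radius_le_mx (R : rcfType) n (B C : 'M[R]_n) :
  nonneg_mx B -> le_mx B C -> spectral_radius B <= spectral_radius C.
Proof.
move=> B_ge0 leBC; apply: spectral_radius_le (spectral_radius_ge0 C) _ => mu.
move=> /spectrum_eigenvector [v eig_v v_neq0]; rewrite leNgt; apply/negP => rhoC_lt.
have C_ge0 : nonneg_mx C by move=> i j; apply: le_trans (B_ge0 i j) (leBC i j).
have monoC : monotone_mx ((Normc.normc mu)%:M - C).
  apply: monotone_scalar_sub => // s; rewrite in_itv /= andbT => mu_le_s.
  apply/negP => /root_char_poly_spectrum /spectral_radius_ge.
  rewrite normc_real ?(le_trans (normc_ge0 mu)) // => s_le_rhoC.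
  by have := lt_le_trans (le_lt_trans s_le_rhoC rhoC_lt) mu_le_s; rewrite ltxx.
by have := eigenvalue_normc_lt B_ge0 leBC monoC eig_v v_neq0; rewrite ltxx.
Qed.

Lemma invmx_sub (R : comUnitRingType) n (U1 U2 : 'M[R]_n) :
  U1 \in unitmx -> U2 \in unitmx ->
  invmx U1 - invmx U2 = invmx U1 *m (U2 - U1) *m invmx U2.
Proof. by move=> unitU1 unitU2; rewrite mulmxBr mulmxBl mulmxK // mulVmx // mul1mx. Qed.

Definition multisplitting_precond (R : numFieldType) n p (U E : 'I_p -> 'M[R]_n) :
  'M[R]_n := \sum_(k < p) E k *m invmx (U k).

Section WeakRegularMultisplitting.
Variables (R : numFieldType) (n p : nat) (A : 'M[R]_n) (U V E : 'I_p -> 'M[R]_n).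
Hypothesis splitting : forall k, weak_regular_splitting A (U k) (V k).
Hypothesis E_ge0 : forall k, nonneg_mx (E k).

Lemma multisplitting_iter_ge0 : nonneg_mx (multisplitting_iter U V E).
Proof. by apply: nonneg_mx_sum => k; apply: nonneg_mxM => //; case: (splitting k). Qed.

Lemma multisplitting_precond_ge0 : nonneg_mx (multisplitting_precond U E).
Proof. by apply: nonneg_mx_sum => k; apply: nonneg_mxM => //; case: (splitting k). Qed.

Hypothesis E_sum1 : \sum_(k < p) E k = 1%:M.

Lemma multisplitting_iterE :
  multisplitting_iter U V E = 1%:M - multisplitting_precond U E *m A.
Proof.
rewrite /multisplitting_iter -E_sum1 mulmx_suml -sumrB; apply: eq_bigr => k _.
have [-> unitU _ _] := splitting k.
rewrite mulmxBr -[E k *m _ *m U k]mulmxA mulVmx // mulmx1.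
by rewrite opprB addrC subrK mulmxA.
Qed.

Lemma multisplitting_iter_subinvariant_eq0 (w : 'rV[R]_n) :
  A \in unitmx -> nonneg_mx (invmx A) -> nonneg_mx w ->
  le_mx w (w *m multisplitting_iter U V E) -> w = 0.
Proof.
move=> unitA invA_ge0 w_ge0; rewrite multisplitting_iterE mulmxBr mulmx1 mulmxA.
set y := w *m multisplitting_precond U E => /le_mx_subr_ge0.
rewrite addrAC subrr add0r => NyA_ge0.
have y0 : y = 0.
  apply: nonneg_mxN_eq0; first exact: nonneg_mxM multisplitting_precond_ge0.
  by rewrite -(mulmxK unitA (- y)) mulNmx; apply: nonneg_mxM.
have wEU0 k : w *m (E k *m invmx (U k)) = 0.
  apply/matrixP => i j; have := congr1 (fun M : 'rV_n => M i j) y0.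
  rewrite /y /multisplitting_precond mulmx_sumr summxE mxE => /psumr_eq0P -> //.
  by move=> l _; apply: nonneg_mxM => //; apply: nonneg_mxM => //; case: (splitting l).
have wE0 k : w *m E k = 0.
  have [_ unitU _ _] := splitting k.
  by rewrite -(mulmxKV unitU (w *m E k)) -[w *m E k *m _]mulmxA wEU0 mul0mx.
by rewrite -[w]mulmx1 -E_sum1 mulmx_sumr big1.
Qed.

End WeakRegularMultisplitting.

Lemma multisplitting_iter_le (R : numFieldType) n p (A : 'M[R]_n)
    (U1 V1 U2 V2 E : 'I_p -> 'M[R]_n) :
  nonneg_mx A ->
  (forall k, weak_regular_splitting A (U1 k) (V1 k)) ->
  (forall k, weak_regular_splitting A (U2 k) (V2 k)) ->
  (forall k, nonneg_mx (E k)) -> \sum_(k < p) E k = 1%:M ->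
  (forall k, le_mx (V1 k) (V2 k)) ->
  le_mx (multisplitting_iter U1 V1 E) (multisplitting_iter U2 V2 E).
Proof.
move=> A_ge0 split1 split2 E_ge0 E_sum1 leV; apply/le_mx_subr_ge0.
rewrite (multisplitting_iterE split1) ?(multisplitting_iterE split2) //.
rewrite opprB addrC addrA subrK -mulmxBl.
apply: nonneg_mxM A_ge0; rewrite -sumrB; apply: nonneg_mx_sum => k.
have [eA1 unitU1 invU1_ge0 _] := split1 k; have [eA2 unitU2 invU2_ge0 _] := split2 k.
rewrite -mulmxBr invmx_sub //.
have -> : U2 k - U1 k = V2 k - V1 k.
  have eU1 : U1 k = A + V1 k by rewrite eA1 subrK.
  have eU2 : U2 k = A + V2 k by rewrite eA2 subrK.
  by rewrite eU1 eU2 opprD addrACA subrr add0r.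
apply: nonneg_mxM => //.
by apply: nonneg_mxM => //; apply: nonneg_mxM => //; apply/le_mx_subr_ge0.
Qed.

Lemma spectral_radius_multisplitting_iter_lt1 (R : rcfType) n p (A : 'M[R]_n)
    (U V E : 'I_p -> 'M[R]_n) :
  A \in unitmx -> nonneg_mx (invmx A) -> weak_regular_multisplitting A U V E ->
  spectral_radius (multisplitting_iter U V E) < 1.
Proof.
move=> unitA invA_ge0 [splitting E_ok E_sum1].
have E_ge0 k : nonneg_mx (E k) by case: (E_ok k).
apply: spectral_radius_lt ltr01 _ => mu /spectrum_eigenvector [v eig_v v_neq0].
rewrite ltNge; apply/negP => one_le_mu; move/eqP: v_neq0; apply; apply: row_normc_eq0.
apply: (multisplitting_iter_subinvariant_eq0 splitting) => //; first exact: row_normc_ge0.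
move=> i j; have H_ge0 := multisplitting_iter_ge0 splitting E_ge0.
apply: le_trans (row_normc_eigen H_ge0 eig_v i j).
by rewrite !mxE; apply: ler_peMl; rewrite ?normc_ge0.
Qed.

Unset Implicit Arguments.

Theorem corollary5p12 (R : rcfType) (n p : nat) (A : 'M[R]_n)
  (U1 V1 U2 V2 E : 'I_p -> 'M[R]_n) :
  A \in unitmx -> nonneg_mx A -> nonneg_mx (invmx A) ->
  weak_regular_multisplitting A U1 V1 E ->
  weak_regular_multisplitting A U2 V2 E ->
  (forall k, le_mx (V1 k) (V2 k)) ->
  spectral_radius (multisplitting_iter U1 V1 E)
    <= spectral_radius (multisplitting_iter U2 V2 E) /\
  spectral_radius (multisplitting_iter U2 V2 E) < 1.
Proof.
move=> unitA A_ge0 invA_ge0 wrm1 wrm2 leV.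
have [split1 E_ok E_sum1] := wrm1; have [split2 _ _] := wrm2.
have E_ge0 k : nonneg_mx (E k) by case: (E_ok k).
split; last exact: spectral_radius_multisplitting_iter_lt1 unitA invA_ge0 wrm2.
apply: spectral_radius_le_mx (multisplitting_iter_ge0 split1 E_ge0) _.
exact: multisplitting_iter_le A_ge0 split1 split2 E_ge0 E_sum1 leV.
Qed.
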